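(* Let $\alpha:[0,T]\to[0,1]$ be continuously differentiable and strictly decreasing with $\alpha_0=1$ and $\alpha_T=0$. Fix $x_0\in\mathbb{R}^d$ and, for $t\in(0,T]$, let $p_t=\mathcal{N}(\sqrt{\alpha_t}\,x_0,(1-\alpha_t)I_d)$. This is the time-$t$ marginal of the linear SDE $du=F_t u\,dt+G_t\,dw$ with $F_t=\tfrac12\tfrac{d\log\alpha_t}{dt}I_d$, $G_t=\sqrt{-\tfrac{d\log\alpha_t}{dt}}\,I_d$, started from the Dirac distribution $p_0=\delta_{x_0}$. Let $u:(0,T)\to\mathbb{R}^d$ be any solution of the probability flow ODE with the exact score, $$\frac{du}{dt}=F_t u-\tfrac12 G_tG_t^T\nabla\log p_t(u).$$ Then $\epsilon_{\rm GT}(u(t),t):=-\sqrt{1-\alpha_t}\,\nabla\log p_t(u(t))$ is constant in $t\in(0,T)$. Moreover, if $u(t)$ has a limit $u(T)$ as $t\to T$, this constant equals $-\nabla\log p_T(u(T))=u(T)$.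
   Context: $\nabla$ denotes the gradient with respect to the spatial variable. The quantity $\epsilon_{\rm GT}$ is the ground-truth ''noise prediction'' associated with the score parameterization $s(u,t)=-\epsilon(u,t)/\sqrt{1-\alpha_t}$. *)

From HB Require Import structures.
From mathcomp Require Import all_boot all_order all_algebra.
From mathcomp Require Import all_classical all_reals all_analysis.
Set Implicit Arguments. Unset Strict Implicit. Unset Printing Implicit Defensive.
Import Order.TTheory GRing.Theory Num.Theory.
Import numFieldNormedType.Exports.
Local Open Scope classical_set_scope.
Local Open Scope ring_scope.

Definition gauss_pdf (R : realType) (d : nat) (m : 'rV[R]_d) (s2 : R)
    (x : 'rV[R]_d) : R :=
  (2 * pi * s2) `^ (- (d%:R / 2)) *
  expR (- (\sum_(i < d) (x ord0 i - m ord0 i) ^+ 2) / (2 * s2)).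

Definition grad (R : realType) (d : nat) (f : 'rV[R]_d -> R) (x : 'rV[R]_d)
    : 'rV[R]_d :=
  \row_(i < d) ('D_(delta_mx ord0 i) f x).

Definition p_t (R : realType) (d : nat) (alpha : R -> R) (x0 : 'rV[R]_d)
    (t : R) : 'rV[R]_d -> R :=
  gauss_pdf (Num.sqrt (alpha t) *: x0) (1 - alpha t).

Definition score (R : realType) (d : nat) (alpha : R -> R) (x0 : 'rV[R]_d)
    (t : R) (y : 'rV[R]_d) : 'rV[R]_d :=
  grad (fun z => ln (p_t alpha x0 t z)) y.

Definition dlog_alpha (R : realType) (alpha : R -> R) (t : R) : R :=
  derive1 (fun s => ln (alpha s)) t.

Definition F_coef (R : realType) (alpha : R -> R) (t : R) : R :=
  dlog_alpha alpha t / 2.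
Definition G_coef (R : realType) (alpha : R -> R) (t : R) : R :=
  Num.sqrt (- dlog_alpha alpha t).

Definition eps_GT (R : realType) (d : nat) (alpha : R -> R) (x0 : 'rV[R]_d)
    (y : 'rV[R]_d) (t : R) : 'rV[R]_d :=
  - (Num.sqrt (1 - alpha t) *: score alpha x0 t y).

From HB Require Import structures.
From mathcomp Require Import all_boot all_order all_algebra.
From mathcomp Require Import all_classical all_reals all_analysis.
From mathcomp Require Import ring lra.
Import Order.TTheory GRing.Theory Num.Theory.
Import numFieldNormedType.Exports.
Local Open Scope classical_set_scope.
Local Open Scope ring_scope.

(* For the Gaussian marginals the score is explicit: eps_GT (y, t) is the noise
   (y - sqrt alpha_t x0) / sqrt (1 - alpha_t) that produces y from x0.  Along the
   probability flow ODE every coordinate of this noise has zero derivative, so it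
   is constant on (0, T); since alpha_t -> 0 as t -> T it tends to u(T), and
   p_T = N(0, I) gives - grad log p_T (u(T)) = u(T). *)

Lemma is_derive_mx_entry {R : realFieldType} {V : normedModType R} {m n : nat}
    {M : V -> 'M[R]_(m, n)} {x v : V} {dM : 'M[R]_(m, n)} i j :
  is_derive x v M dM -> is_derive x v (fun y => M y i j) (dM i j).
Proof.
move=> hM; have dMx := @ex_derive _ _ _ _ _ _ _ hM.
apply: DeriveDef; first by move/derivable_mxP: dMx; apply.
by rewrite -[dM]derive_val derive_mx // mxE.
Qed.

Lemma is_derive0_cst_oo {R : realType} (f : R -> R) (a b : R) :
  (forall x, x \in `]a, b[ -> is_derive x 1 f 0) ->
  {in `]a, b[ &, forall x y, f x = f y}.
Proof.
move=> f'0.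
have df x : x \in `]a, b[ -> derivable f x 1 by move/f'0.
have f'E x : x \in `]a, b[ -> derive1 f x = 0.
  by move/f'0 => f'x; rewrite derive1E derive_val.
have f'_ge0 x : x \in `]a, b[ -> 0 <= derive1 f x by move/f'E ->.
have f'_le0 x : x \in `]a, b[ -> derive1 f x <= 0 by move/f'E ->.
have cf : {in `]a, b[%classic, continuous f}.
  move=> x; rewrite inE /= => /df dfx.
  exact/differentiable_continuous/derivable1_diffP.
have le_f x y : x \in `]a, b[ -> y \in `]a, b[ -> x <= y -> f x = f y.
  move=> xab yab xy; apply/le_anti/andP; split.
  - exact: (ger0_derive1_le_oo df f'_ge0 cf).
  - exact: (ler0_derive1_le_oo df f'_le0 cf).
move=> x y xab yab; have [xy|/ltW yx] := leP x y; first exact: le_f.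
by apply/esym/le_f.
Qed.

Lemma invr_sqrt {R : rcfType} (x : R) : 0 < x -> (Num.sqrt x)^-1 = Num.sqrt x / x.
Proof.
move=> x_gt0; have s_neq0 : Num.sqrt x != 0 by rewrite gt_eqF // sqrtr_gt0.
by rewrite -{3}(sqr_sqrtr (ltW x_gt0)) expr2 invfM mulVKf.
Qed.

Section GaussianScore.
Variables (R : realType) (d : nat).

Lemma is_derive_sum_sqr_sub (m y : 'rV[R]_d) i :
  is_derive y (delta_mx ord0 i)
    (fun z : 'rV[R]_d => \sum_(j < d) (z ord0 j - m ord0 j) ^+ 2)
    (2 * (y ord0 i - m ord0 i)).
Proof.
set e := delta_mx ord0 i : 'rV[R]_d.
have de j : is_derive y e (fun z : 'rV[R]_d => z ord0 j - m ord0 j) (e ord0 j).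
  have := is_deriveB (is_derive_mx_entry ord0 j (is_derive_id y e))
    (is_derive_cst (m ord0 j) y e).
  by rewrite subr0.
have dsq j : is_derive y e (fun z : 'rV[R]_d => (z ord0 j - m ord0 j) ^+ 2)
    (2 * (y ord0 j - m ord0 j) * e ord0 j).
  rewrite -[fun z => _]exprfctE; apply: is_derive_eq.
  by rewrite expr1 mulr_natl.
rewrite -[fun z => _]fct_sumE; apply: is_derive_eq.
rewrite (bigD1 i) //= big1 => [|j ji]; last by rewrite mxE (negbTE ji) andbF mulr0.
by rewrite mxE !eqxx mulr1 addr0.
Qed.

Lemma grad_ln_gauss_pdf (m y : 'rV[R]_d) (s2 : R) : 0 < s2 ->
  grad (fun z => ln (gauss_pdf m s2 z)) y = - (s2^-1 *: (y - m)).
Proof.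
move=> s2_gt0.
set C := (2 * pi * s2) `^ (- (d%:R / 2)).
have C_gt0 : 0 < C by apply: powR_gt0; rewrite !mulr_gt0 // pi_gt0.
have -> : (fun z => ln (gauss_pdf m s2 z)) = (fun z => ln C +
    (- (2 * s2)^-1) * \sum_(j < d) (z ord0 j - m ord0 j) ^+ 2).
  apply/funext => z; rewrite /gauss_pdf -/C lnM ?posrE ?expR_gt0 // expRK.
  by rewrite mulNr mulrC mulNr.
apply/rowP => i; rewrite !mxE.
have dlnp := is_deriveD (is_derive_cst (ln C) y (delta_mx ord0 i))
  (is_deriveZ (- (2 * s2)^-1) (is_derive_sum_sqr_sub m y i)).
rewrite derive_val add0r /GRing.scale /=; field.
by rewrite gt_eqF.
Qed.

End GaussianScore.

Section Schedule.
Context {R : realType} {T : R} {alpha : R -> R}.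
Hypothesis alpha_derivable : forall t, 0 <= t <= T -> derivable alpha t 1.
Hypothesis alpha_decr : forall s t, 0 <= s -> s < t -> t <= T -> alpha t < alpha s.

Lemma schedule_in01 : alpha 0 = 1 -> alpha T = 0 ->
  {in `]0, T[, forall t, 0 < alpha t < 1}.
Proof.
move=> alpha0 alphaT t; rewrite in_itv /= => /andP[t_gt0 t_ltT].
apply/andP; split; first by rewrite -alphaT alpha_decr // ltW.
by rewrite -alpha0 alpha_decr // ltW.
Qed.

Lemma schedule_derivable_oo : {in `]0, T[, forall t, derivable alpha t 1}.
Proof.
by move=> t; rewrite in_itv /= => /andP[t_gt0 t_ltT]; apply: alpha_derivable; rewrite !ltW.
Qed.

Lemma schedule_derive1_le0 : {in `]0, T[, forall t, derive1 alpha t <= 0}.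
Proof.
move=> t tT; apply: (@decr_derive1_le0_itv _ _ true false _ _ _ _ _ tT).
  by move=> x; rewrite inE; exact: schedule_derivable_oo.
move=> x y; rewrite !in_itv /= => /andP[_ x_leT] /andP[y_ge0 _] yx.
exact: alpha_decr.
Qed.

Lemma schedule_cvg_left : 0 <= T -> alpha t @[t --> T^'-] --> alpha T.
Proof.
move=> T_ge0; apply: cvg_at_left_filter.
by apply/differentiable_continuous/derivable1_diffP/alpha_derivable; rewrite lexx andbT.
Qed.

End Schedule.

Section NoisePrediction.
Context {R : realType} {d : nat} (alpha : R -> R) (x0 : 'rV[R]_d).

Definition pflow_drift (t : R) (y : 'rV[R]_d) : 'rV[R]_d :=
  F_coef alpha t *: y - (1 / 2 * (G_coef alpha t * G_coef alpha t)) *: score alpha x0 t y.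

Definition noise (y : 'rV[R]_d) (t : R) : 'rV[R]_d :=
  (Num.sqrt (1 - alpha t))^-1 *: (y - Num.sqrt (alpha t) *: x0).

Lemma score_p_t t y : alpha t < 1 ->
  score alpha x0 t y = - ((1 - alpha t)^-1 *: (y - Num.sqrt (alpha t) *: x0)).
Proof. by move=> a_lt1; rewrite /score /p_t grad_ln_gauss_pdf // subr_gt0. Qed.

Lemma score_p_t_alpha0 t y : alpha t = 0 -> score alpha x0 t y = - y.
Proof.
move=> a0; rewrite score_p_t a0 ?ltr01 //.
by rewrite subr0 invr1 scale1r sqrtr0 scale0r subr0.
Qed.

Lemma eps_GT_noise t y : alpha t < 1 -> eps_GT alpha x0 y t = noise y t.
Proof.
move=> a_lt1; have b_gt0 : 0 < 1 - alpha t by rewrite subr_gt0.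
by rewrite /eps_GT score_p_t // scalerN opprK scalerA /noise invr_sqrt.
Qed.

Lemma dlog_alphaE t : 0 < alpha t -> derivable alpha t 1 ->
  dlog_alpha alpha t = derive1 alpha t / alpha t.
Proof.
move=> a_gt0 /derivableP da.
rewrite /dlog_alpha !derive1E mulrC.
by have [_ ->] := is_derive1_comp (is_derive1_ln a_gt0) da.
Qed.

Lemma G_coef_sqr t : 0 < alpha t -> derivable alpha t 1 -> derive1 alpha t <= 0 ->
  G_coef alpha t * G_coef alpha t = - (derive1 alpha t / alpha t).
Proof.
move=> a_gt0 da a'_le0; rewrite /G_coef dlog_alphaE // -expr2 sqr_sqrtr //.
by rewrite oppr_ge0 mulr_le0_ge0 // invr_ge0 ltW.
Qed.

(* The numerator [u_i - sqrt a x0_i] has logarithmic derivative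
   [- a' / (2 (1 - a))], the opposite of that of [1 / sqrt (1 - a)]. *)
Lemma is_derive_noise_coord (u : R -> 'rV[R]_d) t i :
  0 < alpha t < 1 -> derivable alpha t 1 -> derive1 alpha t <= 0 ->
  is_derive t 1 u (pflow_drift t (u t)) ->
  is_derive t 1 (fun s => noise (u s) s ord0 i) 0.
Proof.
move=> /andP[a_gt0 a_lt1] da a'_le0 du.
have b_gt0 : 0 < 1 - alpha t by rewrite subr_gt0.
have /derivableP := da; rewrite -derive1E => {}da.
have dsa := is_derive1_comp (is_derive1_sqrt a_gt0) da.
have db := is_deriveB (is_derive_cst (1 : R) t 1) da.
have dsb := @is_derive1_comp _ Num.sqrt (fun s => 1 - alpha s) t _ _
  (is_derive1_sqrt b_gt0) db.
have r_neq0 : Num.sqrt (1 - alpha t) != 0 by rewrite gt_eqF // sqrtr_gt0.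
have dinv := is_deriveV (f := fun s => Num.sqrt (1 - alpha s)) r_neq0 dsb.
have dnum := is_deriveB (is_derive_mx_entry ord0 i du)
  (is_deriveM dsa (is_derive_cst (x0 ord0 i) t 1)).
have -> : (fun s => noise (u s) s ord0 i) = (fun s => (Num.sqrt (1 - alpha s))^-1) *
    (fun s => u s ord0 i - Num.sqrt (alpha s) * x0 ord0 i).
  by apply/funext => s; rewrite /noise !mxE.
apply: is_derive_eq (is_deriveM dinv dnum) _.
rewrite /pflow_drift /F_coef dlog_alphaE // G_coef_sqr // score_p_t // !mxE /cst /=.
rewrite scaler0 add0r sqr_sqrtr ?ltW // !invfM !invr_sqrt // /GRing.scale !fctE /=.
by field; rewrite !gt_eqF.
Qed.

Lemma noise_path_cst {u : R -> 'rV[R]_d} {a b : R} :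
  {in `]a, b[, forall t, 0 < alpha t < 1} ->
  {in `]a, b[, forall t, derivable alpha t 1} ->
  {in `]a, b[, forall t, derive1 alpha t <= 0} ->
  {in `]a, b[, forall t : R, is_derive t 1 u (pflow_drift t (u t))} ->
  {in `]a, b[ &, forall s t, noise (u s) s = noise (u t) t}.
Proof.
move=> a01 da a'_le0 du s t sab tab; apply/rowP => i.
apply: (@is_derive0_cst_oo _ (fun s => noise (u s) s ord0 i) a b) sab tab => x xab.
by apply: is_derive_noise_coord; [exact: a01 | exact: da | exact: a'_le0 | exact: du].
Qed.

Lemma noise_cvg {F : set_system R} {FF : Filter F} {u : R -> 'rV[R]_d} {uT : 'rV[R]_d} :
  alpha t @[t --> F] --> 0 -> u t @[t --> F] --> uT ->
  noise (u t) t @[t --> F] --> uT.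
Proof.
move=> alpha0 u_uT.
have sa : Num.sqrt (alpha t) @[t --> F] --> Num.sqrt 0.
  by apply: continuous_cvg => //; exact: sqrt_continuous.
have sb : Num.sqrt (1 - alpha t) @[t --> F] --> Num.sqrt (1 - 0).
  by apply: continuous_cvg; [exact: sqrt_continuous | exact: cvgB (cvg_cst _) alpha0].
have -> : uT = (Num.sqrt (1 - 0))^-1 *: (uT - Num.sqrt 0 *: x0).
  by rewrite subr0 sqrtr1 invr1 scale1r sqrtr0 scale0r subr0.
apply: cvgZ; first by apply: cvgV => //; rewrite subr0 sqrtr1 oner_neq0.
exact: cvgB u_uT (cvgZ sa (cvg_cst x0)).
Qed.

End NoisePrediction.

Theorem proposition1 (R : realType) (d : nat) (T : R) (alpha : R -> R)
  (x0 : 'rV[R]_d) (u : R -> 'rV[R]_d) :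
  0 < T ->
  (forall t, 0 <= t <= T -> 0 <= alpha t <= 1) ->
  (forall t, 0 <= t <= T -> derivable alpha t 1) ->
  {within `[0, T], continuous (derive1 alpha)} ->
  (forall s t, 0 <= s -> s < t -> t <= T -> alpha t < alpha s) ->
  alpha 0 = 1 -> alpha T = 0 ->
  (forall t, 0 < t < T ->
     is_derive t 1 u
       (F_coef alpha t *: u t
        - (1 / 2 * (G_coef alpha t * G_coef alpha t)) *: score alpha x0 t (u t))) ->
  exists c : 'rV[R]_d,
    (forall t, 0 < t < T -> eps_GT alpha x0 (u t) t = c) /\
    (forall uT : 'rV[R]_d, u t @[t --> T^'-] --> uT ->
       c = - score alpha x0 T uT /\ c = uT).
Proof.
move=> T_gt0 _ da _ alpha_decr alpha0 alphaT du.
have alpha_in01 := schedule_in01 alpha_decr alpha0 alphaT.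
have du_oo : {in `]0, T[, forall t : R, is_derive t 1 u (pflow_drift alpha x0 t (u t))}.
  by move=> t; rewrite in_itv; exact: du.
have noise_cst := noise_path_cst alpha x0 alpha_in01 (schedule_derivable_oo da)
  (schedule_derive1_le0 da alpha_decr) du_oo.
have mid : T / 2 \in `]0, T[ by rewrite in_itv /=; apply/andP; split; lra.
set c := noise alpha x0 (u (T / 2)) (T / 2).
exists c; split.
  move=> t tT; have tT' : t \in `]0, T[ by rewrite in_itv.
  have /andP[_ a_lt1] := alpha_in01 t tT'.
  by rewrite eps_GT_noise //; apply: noise_cst.
move=> uT u_uT.
have noise_near : \forall t \near T^'-, noise alpha x0 (u t) t = c.
  near=> t; apply: noise_cst => //; rewrite in_itv /=; apply/andP; split.
    by near: t; exact: nbhs_left_gt.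
  by near: t; exact: nbhs_left_lt.
have alpha_cvg : alpha t @[t --> T^'-] --> 0.
  by rewrite -alphaT; exact: schedule_cvg_left da (ltW T_gt0).
have <- : c = uT.
  exact: cvg_unique (cvg_near_cst _ noise_near) (noise_cvg alpha x0 alpha_cvg u_uT).
by split; rewrite // score_p_t_alpha0 // opprK.
Unshelve. all: by end_near.
Qed.
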